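(* Let $\theta\in(\pi/3,\pi/2)$ and define \[ \zeta=\zeta(\theta)=-\frac{1}{2\cos\theta},\qquad z=z(\theta)=\frac{2\cos\theta}{\sqrt{(1-4\cos^2\theta)^3}}. \] Then the three zeros in $t$ of $1+t^2+z(\theta)t^3$ are \[ t_0=-\frac{e^{-i\theta}}{z(2\cos\theta+\zeta)},\qquad t_1=t_0e^{2i\theta},\qquad t_2=\zeta e^{i\theta}t_0. \] *)

From Stdlib Require Import Reals.
From Coquelicot Require Import Coquelicot.
Open Scope R_scope.

Definition cexpi (x : R) : C := (cos x, sin x).

Definition zeta (theta : R) : R := - 1 / (2 * cos theta).

Definition zth (theta : R) : R :=
  2 * cos theta / sqrt ((1 - 4 * (cos theta) ^ 2) ^ 3).

Definition cubic (zz : R) (t : C) : C :=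
  (1 + t * t + RtoC zz * (t * t * t))%C.

Definition t0 (theta : R) : C :=
  (- cexpi (- theta) / RtoC (zth theta * (2 * cos theta + zeta theta)))%C.
Definition t1 (theta : R) : C := (t0 theta * cexpi (2 * theta))%C.
Definition t2 (theta : R) : C :=
  (RtoC (zeta theta) * cexpi theta * t0 theta)%C.

From Stdlib Require Import Reals Lra.
From Coquelicot Require Import Coquelicot.
Open Scope R_scope.

(* With [c = cos theta] and [w = z (2 c + zeta)], the three proposed zeros are
   [-e^{-i theta}/w], [-e^{i theta}/w] and [-zeta/w].  Their elementary symmetric
   functions are [(2 c + zeta)/w], [(1 + 2 c zeta)/w^2 = 0] and [-zeta/w^3], and
   [z zeta = w^3] is the identity [zeta = z^2 (2 c + zeta)^3], which is what the
   choice of [z] is made for.  So Vieta's formulas match the coefficients of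
   [1 + t^2 + z t^3]. *)

Lemma cexpi_0 : cexpi 0 = 1%C.
Proof.
  unfold cexpi. rewrite cos_0, sin_0. reflexivity.
Qed.

Lemma cexpi_add (x y : R) : cexpi (x + y) = (cexpi x * cexpi y)%C.
Proof.
  unfold cexpi. rewrite cos_plus, sin_plus.
  apply injective_projections; simpl; ring.
Qed.

Lemma cexpi_opp_mul (x : R) : (cexpi (- x) * cexpi x)%C = 1%C.
Proof.
  rewrite <- cexpi_add, Rplus_opp_l. exact cexpi_0.
Qed.

Lemma cexpi_opp_add (x : R) : (cexpi (- x) + cexpi x)%C = RtoC (2 * cos x).
Proof.
  unfold cexpi, RtoC. rewrite cos_neg, sin_neg.
  apply injective_projections; simpl; ring.
Qed.

Lemma cubic_factor_of_vieta (zz : R) (r0 r1 r2 : C) :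
  (RtoC zz * (r0 + r1 + r2))%C = (- 1)%C ->
  (r0 * r1 + r0 * r2 + r1 * r2)%C = 0%C ->
  (RtoC zz * (r0 * r1 * r2))%C = (- 1)%C ->
  forall t : C,
    cubic zz t = (RtoC zz * ((t - r0) * (t - r1) * (t - r2)))%C.
Proof.
  intros hsum hpair hprod t.
  replace (RtoC zz * ((t - r0) * (t - r1) * (t - r2)))%C with
    (RtoC zz * (t * t * t) - RtoC zz * (r0 + r1 + r2) * (t * t)
     + RtoC zz * (r0 * r1 + r0 * r2 + r1 * r2) * t
     - RtoC zz * (r0 * r1 * r2))%C by ring.
  rewrite hsum, hpair, hprod. unfold cubic. ring.
Qed.

Section Zeros.

Variable theta : R.
Hypothesis hcos_neq0 : cos theta <> 0.
Hypothesis hcos_small : 4 * cos theta ^ 2 < 1.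

Let S := sqrt ((1 - 4 * cos theta ^ 2) ^ 3).
Let w := RtoC (zth theta * (2 * cos theta + zeta theta)).

Lemma sqrt_cube_neq0 : S <> 0.
Proof. apply Rgt_not_eq, sqrt_lt_R0, pow_lt. lra. Qed.

Lemma zth_neq0 : zth theta <> 0.
Proof.
  apply Rmult_integral_contrapositive_currified; [lra |].
  exact (Rinv_neq_0_compat _ sqrt_cube_neq0).
Qed.

Lemma two_cos_add_zeta :
  2 * cos theta + zeta theta = (4 * cos theta ^ 2 - 1) / (2 * cos theta).
Proof. unfold zeta. field. exact hcos_neq0. Qed.

Lemma w_neq0 : w <> 0%C.
Proof.
  intro h. apply (f_equal fst) in h. simpl in h.
  apply Rmult_integral in h as [h | h]; [exact (zth_neq0 h) |].
  rewrite two_cos_add_zeta in h.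
  apply Rmult_integral in h as [h | h]; [lra |].
  apply Rinv_neq_0_compat in h; [exact h | lra].
Qed.

Lemma zth_mul_zeta :
  zth theta * zeta theta = (zth theta * (2 * cos theta + zeta theta)) ^ 3.
Proof.
  assert (hS := sqrt_cube_neq0).
  assert (hSS : S * S = (1 - 4 * cos theta ^ 2) ^ 3)
    by (apply sqrt_sqrt, pow_le; lra).
  rewrite two_cos_add_zeta. unfold zth, zeta. fold S.
  replace ((2 * cos theta / S * ((4 * cos theta ^ 2 - 1) / (2 * cos theta))) ^ 3)
    with (- (1 - 4 * cos theta ^ 2) ^ 3 / (S * S * S)) by (field; tauto).
  rewrite <- hSS. field. tauto.
Qed.

Lemma t1_eq : t1 theta = (- cexpi theta / w)%C.
Proof.
  unfold t1, t0. fold w.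
  replace (2 * theta) with (theta + theta) by ring. rewrite cexpi_add.
  transitivity (- (cexpi (- theta) * cexpi theta) * cexpi theta / w)%C;
    [field; exact w_neq0 |].
  rewrite cexpi_opp_mul. field. exact w_neq0.
Qed.

Lemma t2_eq : t2 theta = (- RtoC (zeta theta) / w)%C.
Proof.
  unfold t2, t0. fold w.
  transitivity (- RtoC (zeta theta) * (cexpi (- theta) * cexpi theta) / w)%C;
    [field; exact w_neq0 |].
  rewrite cexpi_opp_mul. field. exact w_neq0.
Qed.

Lemma zth_mul_sum_zeros :
  (RtoC (zth theta) * (t0 theta + t1 theta + t2 theta))%C = (- 1)%C.
Proof.
  rewrite t1_eq, t2_eq. unfold t0. fold w.
  transitivity
    (- (RtoC (zth theta) * (cexpi (- theta) + cexpi theta + RtoC (zeta theta))) / w)%C;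
    [field; exact w_neq0 |].
  rewrite cexpi_opp_add, <- RtoC_plus, <- RtoC_mult. fold w.
  field. exact w_neq0.
Qed.

Lemma sum_pair_products_zeros :
  (t0 theta * t1 theta + t0 theta * t2 theta + t1 theta * t2 theta)%C = 0%C.
Proof.
  rewrite t1_eq, t2_eq. unfold t0. fold w.
  transitivity ((cexpi (- theta) * cexpi theta
                 + RtoC (zeta theta) * (cexpi (- theta) + cexpi theta)) / (w * w))%C;
    [field; exact w_neq0 |].
  rewrite cexpi_opp_mul, cexpi_opp_add, <- RtoC_mult, <- RtoC_plus.
  replace (1 + zeta theta * (2 * cos theta)) with 0 by (unfold zeta; field; exact hcos_neq0).
  field. exact w_neq0.
Qed.

Lemma zth_mul_prod_zeros :
  (RtoC (zth theta) * (t0 theta * t1 theta * t2 theta))%C = (- 1)%C.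
Proof.
  rewrite t1_eq, t2_eq. unfold t0. fold w.
  transitivity (- (RtoC (zth theta) * RtoC (zeta theta))
                * (cexpi (- theta) * cexpi theta) / (w * w * w))%C;
    [field; exact w_neq0 |].
  rewrite cexpi_opp_mul, <- RtoC_mult, zth_mul_zeta, !RtoC_pow. fold w.
  field. exact w_neq0.
Qed.

End Zeros.

Lemma cos_between_PI3_PI2 (theta : R) :
  PI / 3 < theta -> theta < PI / 2 -> 0 < cos theta < 1 / 2.
Proof.
  intros h1 h2. assert (hpi := PI_RGT_0). split.
  - apply cos_gt_0; lra.
  - rewrite <- cos_PI3. apply cos_decreasing_1; lra.
Qed.

Theorem lemma3p3 (theta : R) (h1 : PI / 3 < theta) (h2 : theta < PI / 2) :
  forall t : C,
    cubic (zth theta) t =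
    (RtoC (zth theta) * ((t - t0 theta) * (t - t1 theta) * (t - t2 theta)))%C.
Proof.
  destruct (cos_between_PI3_PI2 theta h1 h2) as [hcos_pos hcos_half].
  assert (hcos_neq0 : cos theta <> 0) by lra.
  assert (hcos_small : 4 * cos theta ^ 2 < 1) by nra.
  apply cubic_factor_of_vieta.
  - exact (zth_mul_sum_zeros theta hcos_neq0 hcos_small).
  - exact (sum_pair_products_zeros theta hcos_neq0 hcos_small).
  - exact (zth_mul_prod_zeros theta hcos_neq0 hcos_small).
Qed.
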